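(* The formal power series $G(z)=\sum_{n\ge3}G_n(t)\frac{z^{n-1}}{(n-1)!}\in\mathbb Z[t][[z]]$ is the unique formal power series solution of \[ \frac{dG}{dz}=\frac{z+G}{1-tG} \] satisfying $G(0)=0$.
   Context: $P_n(t)$ ($n\ge3$) is defined by $P_3=1$ and $P_n(t)=P_{n-1}(t)(1+t)+t\sum_{i=3}^{n-2}\binom{n-2}{i-1}P_i(t)P_{n+1-i}(t)$ for $n>3$; it is symmetric with center $(n-3)/2$. For $f$ symmetric with center $d/2$, written uniquely as $f(t)=\sum_{i=0}^{\lfloor d/2\rfloor}\gamma_it^i(1+t)^{d-2i}$, $\gamma(f):=\sum_i\gamma_it^i$. $G_n:=\gamma(P_n)$. *)

From HB Require Import structures.
From mathcomp Require Import all_boot all_order all_algebra.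
From Stdlib Require Import ClassicalEpsilon.
Set Implicit Arguments. Unset Strict Implicit. Unset Printing Implicit Defensive.
Import Order.TTheory GRing.Theory Num.Theory.
Local Open Scope ring_scope.

(* Pseq k = [:: P_3; P_4; ...; P_(k+3)] *)
Fixpoint Pseq (k : nat) : seq {poly int} :=
  match k with
  | 0 => [:: 1]
  | k'.+1 =>
      let s := Pseq k' in
      let n := k'.+4 in
      rcons s (s`_k' * (1 + 'X)
               + 'X * \sum_(3 <= i < n - 1)
                        ('C(n - 2, i - 1))%:R * s`_(i - 3) * s`_(n + 1 - i - 3))
  end.

(* P n = P_n(t) for n >= 3 (meaningless for n < 3) *)
Definition P (n : nat) : {poly int} := (Pseq (n - 3))`_(n - 3).

Definition is_gamma (d : nat) (f g : {poly int}) : Prop :=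
  (size g <= (d./2).+1)%N /\
  f = \sum_(i < (d./2).+1) g`_i *: ('X^i * (1 + 'X) ^+ (d - 2 * i)).

(* gamma(f) for f symmetric with center d/2 (the unique g with is_gamma d f g) *)
Definition gamma (d : nat) (f : {poly int}) : {poly int} :=
  epsilon (inhabits 0) (is_gamma d f).

(* G_n = gamma(P_n), P_n symmetric with center (n-3)/2 *)
Definition Gam (n : nat) : {poly int} := gamma (n - 3) (P n).

Section PS.
Variable R : comUnitRingType.
Definition ps := nat -> R.
Definition ps_one : ps := fun n => (n == 0%N)%:R.
Definition ps_z : ps := fun n => (n == 1%N)%:R.
Definition ps_add (a b : ps) : ps := fun n => a n + b n.
Definition ps_sub (a b : ps) : ps := fun n => a n - b n.
Definition ps_cmul (c : R) (a : ps) : ps := fun n => c * a n.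
Definition ps_mul (a b : ps) : ps := fun n => \sum_(i < n.+1) a i * b (n - i)%N.
Definition ps_deriv (a : ps) : ps := fun n => a n.+1 *+ n.+1.
(* multiplicative inverse (meaningful when a 0 is a unit):
   b_0 = a_0^-1, b_m = - a_0^-1 * sum_{k=1}^m a_k b_(m-k) *)
Fixpoint ps_inv_seq (a : ps) (n : nat) : seq R :=
  match n with
  | 0 => [:: (a 0%N)^-1]
  | n'.+1 =>
      let s := ps_inv_seq a n' in
      rcons s (- (a 0%N)^-1 * \sum_(k < n'.+1) a k.+1 * s`_(n' - k))
  end.
Definition ps_inv (a : ps) : ps := fun n => (ps_inv_seq a n)`_n.
Definition ps_div (a b : ps) : ps := ps_mul a (ps_inv b).
End PS.
Arguments ps_one {R}.
Arguments ps_z {R}.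

(* coefficient of z^m is G_(m+1)/m! for m >= 2, and 0 for m = 0, 1 *)
Definition Gser : ps {poly rat} := fun m =>
  if (2 <= m)%N then (m`!%:R)^-1 *: map_poly intr (Gam m.+1) else 0.

Definition ode_rhs (G : ps {poly rat}) : ps {poly rat} :=
  ps_div (ps_add ps_z G) (ps_sub ps_one (ps_cmul 'X G)).

From mathcomp Require Import all_boot all_order all_algebra.
From mathcomp Require Import zify ring.
From Stdlib Require Import FunctionalExtensionality ClassicalEpsilon.
Set Implicit Arguments. Unset Strict Implicit. Unset Printing Implicit Defensive.
Import Order.TTheory GRing.Theory Num.Theory.
Local Open Scope ring_scope.

(* Replace the factor [1 + t] in the recursion of [P_n] by a parameter [a], and let
   [Q_n] be the polynomials obtained for [a = 1].  Evaluating at [x] and substituting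
   [u = x / (1 + x)^2] turns the recursion for [P_n(x)] into [(1 + x)^(n-3)] times the
   recursion for [Q_n(u)]; hence [P_n = sum_i Q_n[i] t^i (1 + t)^(n-3-2i)], i.e.
   [G_n = Q_n], the gamma-expansion being unique because [x / (1 + x)^2] takes
   infinitely many values.  The recursion for [Q_n] says exactly that
   [G' = z + G + t G G'] coefficientwise, which is the ODE with the invertible
   denominator [1 - t G] cleared; in that form the coefficients of a solution with
   [G(0) = 0] are determined one at a time. *)

Section ParametricRecursion.
Variable a : {poly int}.

Fixpoint Pseq_with (k : nat) : seq {poly int} :=
  match k with
  | 0 => [:: 1]
  | k'.+1 =>
      let s := Pseq_with k' in
      let n := k'.+4 in
      rcons s (s`_k' * a
               + 'X * \sum_(3 <= i < n - 1)
                        ('C(n - 2, i - 1))%:R * s`_(i - 3) * s`_(n + 1 - i - 3))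
  end.

Definition Pwith n := (Pseq_with (n - 3))`_(n - 3).

Lemma size_Pseq_with k : size (Pseq_with k) = k.+1.
Proof. by elim: k => //= k IH; rewrite size_rcons IH. Qed.

Lemma nth_Pseq_with k j : (j <= k)%N -> (Pseq_with k)`_j = Pwith (j + 3).
Proof.
rewrite /Pwith addnK; elim: k => [|k IH]; first by rewrite leqn0 => /eqP ->.
rewrite leq_eqVlt => /orP [/eqP -> //|]; rewrite ltnS => jk.
by rewrite /= nth_rcons size_Pseq_with ltnS jk IH.
Qed.

Lemma Pwith3 : Pwith 3 = 1. Proof. by []. Qed.

Lemma PwithS n : (3 <= n)%N ->
  Pwith n.+1 = Pwith n * a + 'X * \sum_(3 <= i < n)
     ('C(n - 1, i - 1))%:R * Pwith i * Pwith (n + 2 - i).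
Proof.
move=> n3; rewrite {1}/Pwith.
have -> : (n.+1 - 3 = (n - 3).+1)%N by lia.
rewrite /= nth_rcons size_Pseq_with ltnn eqxx nth_Pseq_with // subnK //.
have -> : ((n - 3).+4 - 1 = n)%N by lia.
have -> : ((n - 3).+4 - 2 = n - 1)%N by lia.
congr (_ + _ * _); apply: eq_big_nat => i /andP [i3 iN].
rewrite !nth_Pseq_with; [|lia|lia].
by congr (_ * Pwith _ * Pwith _); lia.
Qed.

End ParametricRecursion.

Lemma P_Pwith n : P n = Pwith (1 + 'X) n.
Proof. by rewrite /P /Pwith; congr (_`_ _); elim: (n - 3)%N => //= k ->. Qed.

Definition Q n := Pwith 1 n.

Definition gamma_sum (d : nat) (g : {poly int}) : {poly int} :=
  \sum_(i < (d./2).+1) g`_i *: ('X^i * (1 + 'X) ^+ (d - 2 * i)).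

Definition ev (p : {poly int}) (x : rat) : rat := (map_poly intr p).[x].

Lemma evD p q x : ev (p + q) x = ev p x + ev q x.
Proof. by rewrite /ev rmorphD hornerD. Qed.
Lemma evM p q x : ev (p * q) x = ev p x * ev q x.
Proof. by rewrite /ev rmorphM hornerM. Qed.
Lemma evX x : ev 'X x = x.
Proof. by rewrite /ev map_polyX hornerX. Qed.
Lemma ev1 x : ev 1 x = 1.
Proof. by rewrite /ev rmorph1 hornerC. Qed.
Lemma ev_nat n x : ev n%:R x = n%:R.
Proof. by rewrite /ev rmorph_nat hornerMn hornerC. Qed.
Lemma ev_sum (I : Type) (r : seq I) (Pr : pred I) (f : I -> {poly int}) x :
  ev (\sum_(i <- r | Pr i) f i) x = \sum_(i <- r | Pr i) ev (f i) x.
Proof. by rewrite /ev rmorph_sum horner_sum. Qed.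

Lemma ev_gamma_sum d (g : {poly int}) (x : rat) : (size g <= (d./2).+1)%N -> 1 + x != 0 ->
  ev (gamma_sum d g) x = (1 + x) ^+ d * ev g (x / (1 + x) ^+ 2).
Proof.
move=> sg x1; rewrite /gamma_sum ev_sum /ev (@horner_coef_wide _ (d./2).+1); last first.
  by rewrite size_map_inj_poly //; exact: intr_inj.
rewrite mulr_sumr; apply: eq_bigr => i _.
rewrite map_polyZ hornerZ !(rmorphM, rmorphXn, rmorphD, rmorph1, map_polyX) /=.
rewrite !hornerE coef_map /=.
have i2 : (2 * i <= d)%N.
  by have := ltn_ord i; move: (nat_of_ord i) => k; rewrite -divn2; lia.
have -> : (1 + x) ^+ d = (1 + x) ^+ (d - 2 * i) * ((1 + x) ^+ 2) ^+ i.
  by rewrite -exprM -exprD subnK.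
have h : ((1 + x) ^+ 2) ^+ i != 0 by rewrite !expf_neq0.
by rewrite map_polyX hornerX expr_div_n; field.
Qed.

Lemma eq_poly_on_injective (p q : {poly int}) (f : nat -> rat) :
  {in [pred k | 2 <= k]%N &, injective f} ->
  (forall k, (2 <= k)%N -> ev p (f k) = ev q (f k)) -> p = q.
Proof.
move=> finj pq; apply: (map_inj_poly (@intr_inj rat) (rmorph0 _)).
apply/eqP; rewrite -subr_eq0; apply/eqP; set r := _ - _.
apply: (@roots_geq_poly_eq0 _ r [seq f k | k <- iota 2 (size r)]).
- apply/allP => y /mapP [k]; rewrite mem_iota => /andP [k2 _] ->.
  by rewrite /root /r hornerD hornerN -/(ev p _) -/(ev q _) pq // subrr.
- rewrite map_inj_in_uniq ?iota_uniq // => m n.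
  by rewrite !mem_iota => /andP [m2 _] /andP [n2 _]; apply: finj.
- by rewrite size_map size_iota.
Qed.

Lemma one_add_nat_neq0 (k : nat) : 1 + k%:R != 0 :> rat.
Proof. by rewrite -[1]/(1%:R) -natrD pnatr_eq0. Qed.

(* [x / (1 + x)^2] takes each value at most twice, at [x] and [1/x]. *)
Lemma gamma_substitution_inj :
  {in [pred k | 2 <= k]%N &, injective (fun k : nat => k%:R / (1 + k%:R) ^+ 2 : rat)}.
Proof.
move=> m n m2 n2 /= /eqP.
have hm : (1 + m%:R) ^+ 2 != 0 :> rat by rewrite expf_neq0 ?one_add_nat_neq0.
have hn : (1 + n%:R) ^+ 2 != 0 :> rat by rewrite expf_neq0 ?one_add_nat_neq0.
rewrite eqr_div // -[1]/(1%:R) -!natrD -!natrX -!natrM eqr_nat => /eqP.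
by move: m2 n2; rewrite !inE; nia.
Qed.

Lemma gamma_sum_inj d (g1 g2 : {poly int}) : (size g1 <= (d./2).+1)%N ->
  (size g2 <= (d./2).+1)%N -> gamma_sum d g1 = gamma_sum d g2 -> g1 = g2.
Proof.
move=> s1 s2 e; apply: (eq_poly_on_injective gamma_substitution_inj) => k _.
have := congr1 (fun p => ev p k%:R) e; rewrite /= !ev_gamma_sum ?one_add_nat_neq0 //.
by apply: mulfI; rewrite expf_neq0 ?one_add_nat_neq0.
Qed.

Lemma size_Q n : (3 <= n)%N -> (size (Q n) <= ((n - 3)./2).+1)%N.
Proof.
elim/ltn_ind: n => n IH n3; case: (ltnP 3 n) => [n4|n_le3]; last first.
  have -> : n = 3 by lia.
  by rewrite /Q Pwith3 size_poly1.
have [m def_n] : exists m, n = m.+1 by exists n.-1; lia.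
have m3 : (3 <= m)%N by lia.
have sz_sum : (size (\sum_(3 <= i < m)
    'C(m - 1, i - 1)%:R * Q i * Q (m + 2 - i))%R <= (n - 3) %/ 2)%N.
  rewrite big_nat_cond; apply: (big_ind (fun p : {poly int} => size p <= (n - 3) %/ 2)%N).
  - by rewrite size_poly0.
  - by move=> p q hp hq; rewrite (leq_trans (size_polyD _ _)) // geq_max hp hq.
  move=> i /andP [/andP [i3 iN] _].
  have h1 := IH i ltac:(lia) i3.
  have h2 := IH (m + 2 - i)%N ltac:(lia) ltac:(lia).
  have h3 := size_polyMleq ('C(m - 1, i - 1)%:R : {poly int}) (Q i).
  have h4 : (size ('C(m - 1, i - 1)%:R : {poly int}) <= 1)%N.
    by rewrite -polyC_natr size_polyC_leq1.
  have h5 := size_polyMleq ('C(m - 1, i - 1)%:R * Q i) (Q (m + 2 - i)).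
  move: h1 h2 h3 h4 h5; rewrite -!divn2; lia.
rewrite def_n /Q PwithS // mulr1.
apply: (leq_trans (size_polyD _ _)); rewrite geq_max; apply/andP; split.
  by rewrite (leq_trans (IH _ _ m3)) //; [lia | rewrite -!divn2; lia].
apply: (leq_trans (size_polyMleq _ _)); rewrite size_polyX.
by move: sz_sum; rewrite /Q -!divn2; lia.
Qed.

Lemma ev_P_Q n (x : rat) : (3 <= n)%N -> 1 + x != 0 ->
  ev (P n) x = (1 + x) ^+ (n - 3) * ev (Q n) (x / (1 + x) ^+ 2).
Proof.
move=> + x1; elim/ltn_ind: n => n IH n3.
case: (ltnP 3 n) => [n4|n_le3]; last first.
  have -> : n = 3 by lia.
  by rewrite P_Pwith /Q !Pwith3 !ev1 mulr1.
have [m def_n] : exists m, n = m.+1 by exists n.-1; lia.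
have m3 : (3 <= m)%N by lia.
set v := 1 + x; set u := x / v ^+ 2.
have x_uv : x = u * v ^+ 2 by rewrite /u divfK // expf_neq0.
have IHm j : (3 <= j)%N -> (j <= m)%N ->
    ev (Pwith (1 + 'X) j) x = v ^+ (j - 3) * ev (Q j) u.
  by move=> j3 jm; rewrite -P_Pwith IH //; lia.
rewrite def_n P_Pwith /Q !PwithS // -/(Q m) !(evD, evM, ev1, evX) IHm //.
have -> : (m.+1 - 3 = (m - 3).+1)%N by lia.
suff -> : x * ev (\sum_(3 <= i < m) 'C(m - 1, i - 1)%:R * Pwith (1 + 'X) i
                                    * Pwith (1 + 'X) (m + 2 - i)) x
  = v ^+ (m - 3).+1 * (u * ev (\sum_(3 <= i < m) 'C(m - 1, i - 1)%:R * Q i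
                                    * Q (m + 2 - i)) u) by rewrite exprS /v; ring.
rewrite !ev_sum mulrA !mulr_sumr; apply: eq_big_nat => i /andP [i3 im].
rewrite !evM !ev_nat !IHm; [|lia|lia|lia|lia].
have -> : v ^+ (m - 3).+1 = v ^+ (i - 3) * v ^+ (m + 2 - i - 3) * v ^+ 2.
  by rewrite -!exprD; congr (_ ^+ _); lia.
by rewrite {1}x_uv; ring.
Qed.

Lemma P_gamma_sum n : (3 <= n)%N -> P n = gamma_sum (n - 3) (Q n).
Proof.
move=> n3; apply: (eq_poly_on_injective (f := fun k => k%:R)) => [a b _ _ /eqP|k _].
  by rewrite eqr_nat => /eqP.
by rewrite ev_P_Q ?ev_gamma_sum ?size_Q ?one_add_nat_neq0.
Qed.

Lemma Gam_Q n : (3 <= n)%N -> Gam n = Q n.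
Proof.
move=> n3; have gammaQ : is_gamma (n - 3) (P n) (Q n).
  by split; [exact: size_Q | exact: P_gamma_sum].
have [size_gam P_gam] := epsilon_spec (inhabits 0) _ (ex_intro _ _ gammaQ).
by apply: (gamma_sum_inj size_gam (size_Q n3)); rewrite -P_gamma_sum //; exact: esym P_gam.
Qed.

Section PowerSeriesRing.
Variable R : comUnitRingType.
Implicit Types a b c : ps R.

Definition ps_trunc a N : {poly R} := \poly_(i < N) a i.

Lemma ps_mul_trunc a b n N : (n < N)%N -> ps_mul a b n = (ps_trunc a N * ps_trunc b N)`_n.
Proof.
move=> nN; rewrite coefM /ps_mul; apply: eq_bigr => i _.
rewrite !coef_poly (leq_ltn_trans _ nN) ?leq_ord //.
by rewrite (leq_ltn_trans _ nN) ?leq_subr.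
Qed.

Lemma ps_mulC a b : ps_mul a b = ps_mul b a.
Proof.
by apply: functional_extensionality => n; rewrite !(ps_mul_trunc _ _ (ltnSn n)) mulrC.
Qed.

Lemma ps_mulA a b c : ps_mul (ps_mul a b) c = ps_mul a (ps_mul b c).
Proof.
have trunc_mul a' b' n : ps_trunc (ps_mul a' b') n.+1 =
    \poly_(i < n.+1) (ps_trunc a' n.+1 * ps_trunc b' n.+1)`_i.
  by apply/polyP => j; rewrite !coef_poly; case: ltnP => // /ps_mul_trunc.
have coefM_trunc (p r : {poly R}) n :
    (\poly_(i < n.+1) p`_i * r)`_n = (p * r)`_n.
  by rewrite !coefM; apply: eq_bigr => i _; rewrite coef_poly ltn_ord.
apply: functional_extensionality => n.
rewrite (ps_mul_trunc _ _ (ltnSn n)) (ps_mul_trunc a _ (ltnSn n)).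
rewrite trunc_mul coefM_trunc [in RHS]mulrC trunc_mul coefM_trunc.
by rewrite [in RHS]mulrC mulrA.
Qed.

Lemma ps_mul1 a : ps_mul a ps_one = a.
Proof.
apply: functional_extensionality => n.
rewrite /ps_mul big_ord_recr /= subnn /ps_one eqxx mulr1 big1 ?add0r //.
by move=> i _; rewrite subn_eq0 leqNgt ltn_ord mulr0.
Qed.

Lemma size_ps_inv_seq a n : size (ps_inv_seq a n) = n.+1.
Proof. by elim: n => //= n IH; rewrite size_rcons IH. Qed.

Lemma nth_ps_inv_seq a n j : (j <= n)%N -> (ps_inv_seq a n)`_j = ps_inv a j.
Proof.
rewrite /ps_inv; elim: n => [|n IH]; first by rewrite leqn0 => /eqP ->.
rewrite leq_eqVlt => /orP [/eqP -> //|]; rewrite ltnS => jn.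
by rewrite /= nth_rcons size_ps_inv_seq ltnS jn IH.
Qed.

Lemma ps_invS a n :
  ps_inv a n.+1 = - (a 0%N)^-1 * \sum_(k < n.+1) a k.+1 * ps_inv a (n - k)%N.
Proof.
rewrite {1}/ps_inv /= nth_rcons size_ps_inv_seq ltnn eqxx; congr (_ * _).
by apply: eq_bigr => k _; rewrite nth_ps_inv_seq ?leq_subr.
Qed.

Lemma ps_mulV a : a 0%N = 1 -> ps_mul a (ps_inv a) = ps_one.
Proof.
move=> a0; apply: functional_extensionality => -[|n].
  by rewrite /ps_mul big_ord1 /ps_inv /= a0 invr1 mulr1.
rewrite /ps_mul big_ord_recl /= a0 mul1r subn0 ps_invS a0 invr1 mulN1r.
by rewrite addNr.
Qed.

Lemma ps_mul_one_sub a (c : R) b n :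
  ps_mul a (ps_sub ps_one (ps_cmul c b)) n = a n - c * ps_mul a b n.
Proof.
rewrite /ps_mul /ps_sub /ps_cmul; under eq_bigr do rewrite mulrBr.
rewrite sumrB; congr (_ - _); first by have := congr1 (fun f => f n) (ps_mul1 a).
by rewrite mulr_sumr; apply: eq_bigr => i _; ring.
Qed.

End PowerSeriesRing.

Definition q n : {poly rat} := map_poly intr (Q n).

Lemma qS n : (3 <= n)%N -> q n.+1 =
  q n + 'X * \sum_(3 <= i < n) ('C(n - 1, i - 1))%:R * q i * q (n + 2 - i).
Proof.
move=> n3; rewrite /q /Q PwithS // mulr1 rmorphD rmorphM /= map_polyX rmorph_sum.
by congr (_ + _ * _); apply: eq_bigr => i _; rewrite !rmorphM rmorph_nat.
Qed.

Lemma fact_neq0 m : (m`!%:R : rat) != 0.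
Proof. by rewrite pnatr_eq0 -lt0n fact_gt0. Qed.

Lemma GserE m : (2 <= m)%N -> Gser m = (m`!%:R)^-1 *: q m.+1.
Proof. by move=> m2; rewrite /Gser m2 Gam_Q. Qed.

Lemma Gser_deriv m : (1 <= m)%N -> ps_deriv Gser m = (m`!%:R)^-1 *: q m.+2.
Proof.
move=> m1; rewrite /ps_deriv GserE // -scaler_nat scalerA; congr (_ *: _).
have h1 := fact_neq0 m.
by rewrite factS natrM; field; rewrite h1 one_add_nat_neq0.
Qed.

Lemma Gser_deriv0 : ps_deriv Gser 0 = 0.
Proof. by rewrite /ps_deriv /Gser /= mulr1n. Qed.

Lemma ps_mul_Gser_deriv N : (2 <= N)%N -> ps_mul Gser (ps_deriv Gser) N =
  (N`!%:R)^-1 *: \sum_(3 <= i < N.+1) ('C(N, i - 1))%:R * q i * q (N + 3 - i).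
Proof.
move=> N2; rewrite /ps_mul -(big_mkord xpredT (fun j => Gser j * ps_deriv Gser (N - j)%N)).
rewrite big_nat_recr //= subnn Gser_deriv0 mulr0 addr0.
rewrite (big_ltn (ltnW N2)) (big_ltn N2) [Gser 0]/Gser [Gser 1]/Gser /=.
rewrite !mul0r !add0r (big_add1 _ _ 2 N.+1) /= scaler_sumr.
apply: eq_big_nat => j /andP [j2 jN].
rewrite GserE // Gser_deriv; last by lia.
have -> : (N + 3 - j.+1 = (N - j).+2)%N by lia.
have -> : (j.+1 - 1 = j)%N by lia.
rewrite -mulrA mulr_natl -scaler_nat scalerA -scalerAl -scalerAr scalerA.
congr (_ *: _).
have jN' : (j <= N)%N by lia.
have h1 := fact_neq0 j; have h2 := fact_neq0 (N - j).
have h3 : ('C(N, j)%:R : rat) != 0 by rewrite pnatr_eq0 -lt0n bin_gt0.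
by rewrite -(bin_fact jN') !natrM; field; rewrite h1 h2 h3.
Qed.

Definition ode_cleared (H : ps {poly rat}) : Prop :=
  forall n, ps_deriv H n = ps_z n + H n + 'X * ps_mul H (ps_deriv H) n.

Lemma Gser_cleared : ode_cleared Gser.
Proof.
case=> [|[|n]].
- by rewrite Gser_deriv0 /ps_z /ps_mul big_ord1 /= Gser_deriv0 !mulr0 !addr0.
- rewrite Gser_deriv // /= invr1 scale1r /q /Q Pwith3 rmorph1 /ps_z /=.
  rewrite /ps_mul big_ord_recr big_ord1 /= Gser_deriv0 /Gser /=.
  by rewrite !mul0r addr0 add0r mulr0 addr0.
rewrite Gser_deriv // qS // ps_mul_Gser_deriv // GserE // /ps_z /= add0r.
by rewrite subn1 (addSnnS n.+2 2) scalerDr scalerAr.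
Qed.

Definition ode_denom (H : ps {poly rat}) := ps_sub ps_one (ps_cmul 'X H).

Lemma ode_cleared_mul H :
  ode_cleared H <-> ps_mul (ps_deriv H) (ode_denom H) = ps_add ps_z H.
Proof.
split=> [hH | e n].
  apply: functional_extensionality => n.
  by rewrite ps_mul_one_sub ps_mulC hH /ps_add; ring.
have := congr1 (fun f : ps {poly rat} => f n) e.
by rewrite /= /ode_denom ps_mul_one_sub ps_mulC /ps_add => <-; ring.
Qed.

Lemma ode_cleared_rhs H : H 0%N = 0 ->
  ode_cleared H <-> forall n, ps_deriv H n = ode_rhs H n.
Proof.
move=> H0; have ode_denom0 : ode_denom H 0%N = 1.
  by rewrite /ode_denom /ps_sub /ps_cmul H0 mulr0 subr0.
rewrite ode_cleared_mul /ode_rhs /ps_div -/(ode_denom H); split=> [<- n | hH].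
  by rewrite ps_mulA ps_mulV // ps_mul1.
have -> : ps_deriv H = ps_mul (ps_add ps_z H) (ps_inv (ode_denom H)).
  exact: functional_extensionality.
by rewrite ps_mulA [ps_mul (ps_inv _) _]ps_mulC ps_mulV // ps_mul1.
Qed.

Lemma ode_cleared_uniq H K : H 0%N = 0 -> K 0%N = 0 ->
  ode_cleared H -> ode_cleared K -> forall n, H n = K n.
Proof.
move=> H0 K0 hH hK; elim/ltn_ind => -[_ | n IH]; first by rewrite H0 K0.
have : H n.+1 *+ n.+1 = K n.+1 *+ n.+1.
  have := hH n; have := hK n; rewrite /ps_deriv => -> ->.
  rewrite IH //; congr (_ + 'X * _); apply: eq_bigr => -[[|i] /= i_lt _].
    by rewrite H0 K0 !mul0r.
  by rewrite !IH //; lia.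
by rewrite -!scaler_nat => /scalerI; apply; rewrite pnatr_eq0.
Qed.

Theorem mainTheorem6 :
  (Gser 0%N = 0 /\ (forall n, ps_deriv Gser n = ode_rhs Gser n)) /\
  (forall H : ps {poly rat},
     H 0%N = 0 -> (forall n, ps_deriv H n = ode_rhs H n) ->
     forall n, H n = Gser n).
Proof.
split; first by split; last exact/ode_cleared_rhs/Gser_cleared.
move=> H H0 /(ode_cleared_rhs H0) hH.
exact: ode_cleared_uniq Gser_cleared.
Qed.
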